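(* Let $G$ be a connected graph on $n\ge 2$ vertices and let $\partial_1(G)$ be the spectral radius (largest eigenvalue) of its distance matrix $D(G)$. Then $\gamma(G)\le \dfrac{n}{\partial_1(G)}$, with equality if and only if $G$ is transmission-regular.
   Context: For a finite simple undirected graph $G$ with $n$ vertices, let $\mathcal{F}=\{x\in\mathbb{R}^{V(G)} : \sum_{v} x_v = 0,\ \|x\|_\infty = 1\}$, for $x\in\mathcal{F}$ let $\gamma_x(G)=\max_{uv\in E(G)}|x_u-x_v|$, and $\gamma(G)=\min_{x\in\mathcal{F}}\gamma_x(G)$. For a connected graph, the distance matrix $D(G)$ has $(u,v)$-entry the shortest-path distance $d(u,v)$; the transmission of $u$ is $\operatorname{tr}(u)=\sum_v d(u,v)$; $G$ is transmission-regular if all vertices have the same transmission. *)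

From HB Require Import structures.
From mathcomp Require Import all_boot all_order all_algebra.
From mathcomp Require Import classical_sets reals.
Set Implicit Arguments. Unset Strict Implicit. Unset Printing Implicit Defensive.
Import Order.TTheory GRing.Theory Num.Theory.
Local Open Scope ring_scope.
Local Open Scope classical_set_scope.

(* A finite simple undirected graph: vertex type T : finType, adjacency
   e : rel T assumed symmetric and irreflexive (hypotheses of the theorem). *)

Section Graph.
Variables (T : finType) (e : rel T).

Definition walk_of_len (u v : T) (k : nat) : bool :=
  [exists p : k.-tuple T, path e u p && (last u p == v)].

(* shortest-path distance: the least k < #|T| with a walk of length k from u
   to v (for a connected graph this is the usual distance d(u,v), since a
   shortest walk is a path with at most #|T|-1 edges). *)
Definition gdist (u v : T) : nat :=
  find (walk_of_len u v) (iota 0 #|T|).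

Variable R : realType.

Definition distmx : 'M[R]_#|T| :=
  \matrix_(i, j) (gdist (enum_val i) (enum_val j))%:R.

Definition dist_spec_radius : R := sup [set a : R | eigenvalue distmx a].

Definition transmission (u : T) : nat := (\sum_(v : T) gdist u v)%N.

Definition transmission_regular : Prop :=
  forall u v : T, transmission u = transmission v.

Definition sup_norm (x : T -> R) : R := \big[Num.max/0]_(v : T) `|x v|.

Definition feasible : set (T -> R) :=
  [set x | \sum_(v : T) x v = 0 /\ sup_norm x = 1].

Definition gamma_x (x : T -> R) : R :=
  \big[Num.max/0]_(p : T * T | e p.1 p.2) `|x p.1 - x p.2|.

(* gamma(G) = min over F of gamma_x(G) (the minimum is attained, so it is the infimum) *)
Definition gamma : R := inf [set gamma_x x | x in feasible].

End Graph.

(* For x in F pick u with |x u| = 1; as x sums to zero,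
   n = |sum_v (x u - x v)| <= sum_v d(u,v) gamma_x(G) = tr(u) gamma_x(G),
   so gamma(G) >= n / max tr.  Conversely the distance profile
   1 - (n / tr w) d(w, .) from a vertex w of maximal transmission sums to zero,
   has sup norm at least 1 and varies by at most n / tr w along edges, so
   gamma(G) = n / max tr.  The distance matrix is nonnegative with column sums
   tr(u), hence its spectral radius is at most max tr, with equality exactly
   when G is transmission-regular: the all-ones vector is then an eigenvector,
   and conversely an eigenvector for max tr has constant modulus, which forces
   every column sum to equal max tr. *)
From HB Require Import structures.
From mathcomp Require Import all_boot all_order all_algebra.
From mathcomp Require Import classical_sets reals.
From mathcomp Require Import complex polyrcf ring lra.
Set Implicit Arguments. Unset Strict Implicit.
Import Order.TTheory GRing.Theory Num.Theory.
Local Open Scope ring_scope.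

Section SymmetricSpectrum.
Variable R : rcfType.
Local Open Scope sesquilinear_scope.

Lemma eigenvalue_map_real_complex n (A : 'M[R]_n) (a : R) :
  eigenvalue (map_mx (real_complex R) A) (real_complex R a) = eigenvalue A a.
Proof. by rewrite !eigenvalue_root_char -map_char_poly fmorph_root. Qed.

(* Viewed in R[i], A is hermitian, hence unitarily diagonalisable with a real
   spectrum; if no eigenvalue were positive, the quadratic form of A would be
   nonpositive, contradicting its positive value on the all-ones vector. *)
Lemma symmx_sum_gt0_eigen_gt0 n (A : 'M[R]_n) : A^T = A ->
  0 < \sum_i \sum_j A i j -> exists2 a, eigenvalue A a & 0 < a.
Proof.
move=> Asym Apos; set A' := map_mx (real_complex R) A.
have real_cR (x : R) : real_complex R x \is Num.real.
  by rewrite realE ler0c -[0 : R[i]]/(real_complex R 0) lecR -realE num_real.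
have A'herm : A' \is hermsymmx.
  apply: realsym_hermsym; last by apply/mxOverP => i j; rewrite mxE real_cR.
  by apply/is_hermitianmxP; rewrite expr0 scale1r map_mx_id // /A' map_trmx Asym.
set P := spectralmx A'; set d := spectral_diag A'.
have A'E : A' = invmx P *m diag_mx d *m P.
  by apply/orthomx_spectralP; exact: hermitian_normalmx.
have Punit : P \in unitmx := spectral_unit A'.
have [k dk_gt0] : exists k, 0 < d 0 k.
  apply/existsP; apply: contraT; rewrite negb_exists => /forallP d_le0.
  set u : 'rV[R[i]]_n := const_mx 1; set w := u *m P^t*.
  have formE : (u *m A' *m u^T) 0 0 = real_complex R (\sum_i \sum_j A i j).
    rewrite !mxE exchange_big rmorph_sum; apply: eq_bigr => j _ /=.
    rewrite !mxE rmorph_sum big_distrl /=; apply: eq_bigr => i _.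
    by rewrite !mxE mul1r mulr1.
  have formD : u *m A' *m u^T = w *m diag_mx d *m w^t*.
    have PuE : P *m u^T = w^t*.
      rewrite /w trmx_mul map_mxM trmxCK; congr (_ *m _).
      by apply/matrixP => i j; rewrite !mxE rmorph1.
    by rewrite A'E (invmx_unitary (spectral_unitarymx A')) -PuE /w !mulmxA.
  have : (u *m A' *m u^T) 0 0 <= 0.
    rewrite formD mxE; apply: sumr_le0 => i _.
    rewrite mul_mx_diag !mxE -mulrA mulrC -mulrA; apply: mulr_le0_ge0.
      by have := d_le0 i; rewrite (real_ltNge (real0 _) (mxOverP
        (hermitian_spectral_diag_real A'herm) 0 i)) negbK.
    by rewrite mulrC mul_conjC_ge0.
  by rewrite formE -[0 : R[i]]/(real_complex R 0) lecR leNgt Apos.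
have dkE : real_complex R (complex.Re (d 0 k)) = d 0 k.
  by have := ger0_Im (ltW dk_gt0); case: (d 0 k) => re im /= ->.
exists (complex.Re (d 0 k)); last by move: dk_gt0; rewrite ltcE => /andP[].
rewrite -eigenvalue_map_real_complex dkE; apply/eigenvalueP; exists (row k P).
  have /(congr1 (row k)) : P *m A' = diag_mx d *m P.
    by rewrite A'E !mulmxA mulmxV // mul1mx.
  by rewrite -row_mul => ->; apply/rowP => j; rewrite mul_diag_mx !mxE.
apply/eqP => /(congr1 (fun v => v *m invmx P)).
rewrite rowE mulmxK // mul0mx => /matrixP /(_ 0 k).
by rewrite !mxE !eqxx /= => /eqP; rewrite oner_eq0.
Qed.

End SymmetricSpectrum.

Section NonnegativeMatrix.
Variables (R : realFieldType) (m : nat) (A : 'M[R]_m).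
Hypothesis A_ge0 : forall i j, 0 <= A i j.

Lemma eigenvector_normmax (a : R) : eigenvalue A a ->
  exists v : 'rV_m, exists M, exists j,
    [/\ v *m A = a *: v, 0 < M, `|v 0 j| = M & forall i, `|v 0 i| <= M].
Proof.
move=> /eigenvalueP [v vA v_neq0].
have [i vi_neq0] : exists i, v 0 i != 0.
  apply/existsP; apply: contraT; rewrite negb_exists => /forallP v0.
  move: v_neq0; apply: contraNT => _; apply/eqP/rowP => i.
  by have := v0 i; rewrite negbK mxE => /eqP.
have [j _ Mj] := @eq_bigmax _ _ _ 0 i xpredT (fun i => `|v 0 i|) isT
  (fun i _ => normr_ge0 _).
exists v, (\big[Num.max/0]_i `|v 0 i|), j; split => //.
  by apply: lt_le_trans (le_bigmax _ _ i); rewrite normr_gt0.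
by move=> k; apply: le_bigmax.
Qed.

Lemma eigenvector_norm_le_colsum (a : R) (v : 'rV_m) k : v *m A = a *: v ->
  `|a| * `|v 0 k| <= \sum_i `|v 0 i| * A i k.
Proof.
move=> /(congr1 (fun w : 'rV_m => w 0 k)); rewrite -normrM !mxE => <-.
apply: le_trans (ler_norm_sum _ _ _) _.
by apply: ler_sum => i _; rewrite normrM (ger0_norm (A_ge0 i k)).
Qed.

Lemma weighted_colsum_le (v : 'rV[R]_m) (M : R) k : (forall i, `|v 0 i| <= M) ->
  \sum_i `|v 0 i| * A i k <= M * \sum_i A i k.
Proof. by move=> vM; rewrite big_distrr; apply: ler_sum => i _; apply: ler_wpM2r. Qed.

Lemma eigenvalue_norm_le_colsum (a c : R) : eigenvalue A a ->
  (forall k, \sum_i A i k <= c) -> `|a| <= c.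
Proof.
move=> Aa Ac; have [v [M [j [vA M_gt0 vjM vM]]]] := eigenvector_normmax Aa.
have := eigenvector_norm_le_colsum j vA; rewrite vjM => aM_le.
rewrite -(ler_pM2r M_gt0); apply: le_trans aM_le (le_trans (weighted_colsum_le j vM) _).
by rewrite mulrC ler_pM2r.
Qed.

Lemma eigenvalue_colsum_eq (c : R) : eigenvalue A c ->
  (forall i j, i != j -> 0 < A i j) -> (forall k, \sum_i A i k <= c) ->
  forall k, \sum_i A i k = c.
Proof.
move=> Ac A_gt0 c_ge; have [v [M [j [vA M_gt0 vjM vM]]]] := eigenvector_normmax Ac.
have cM_le k : `|v 0 k| = M -> c * M <= \sum_i `|v 0 i| * A i k.
  move=> vkM; rewrite -vkM; apply: le_trans (eigenvector_norm_le_colsum k vA).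
  by rewrite ler_wpM2r ?real_ler_norm ?num_real.
have v_normE i : `|v 0 i| = M.
  have gap_ge0 i' : xpredT i' -> 0 <= (M - `|v 0 i'|) * A i' j.
    by move=> _; rewrite mulr_ge0 ?subr_ge0.
  have gap0 : \sum_i (M - `|v 0 i|) * A i j = 0.
    apply/eqP; rewrite eq_le sumr_ge0 // andbT.
    under eq_bigr do rewrite mulrBl; rewrite sumrB -mulr_sumr subr_le0.
    by apply: le_trans _ (cM_le j vjM); rewrite mulrC ler_pM2r.
  have [->//|ij] := eqVneq i j.
  move/eqP: (psumr_eq0P gap_ge0 gap0 (i := i) isT).
  by rewrite mulf_eq0 (gt_eqF (A_gt0 _ _ ij)) orbF subr_eq0 => /eqP.
move=> k; apply/eqP; rewrite eq_le c_ge /= -(ler_pM2r M_gt0) [X in _ <= X]mulrC.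
apply: le_trans (cM_le k (v_normE k)) (weighted_colsum_le k _).
by move=> i; rewrite v_normE.
Qed.

End NonnegativeMatrix.

Section EigenvalueSup.
Local Open Scope classical_set_scope.
Variables (R : realType) (m : nat) (A : 'M[R]_m).

(* A has finitely many eigenvalues (roots of its characteristic polynomial),
   so the supremum of a nonempty set of them is a maximum. *)
Lemma sup_eigenvalue (a : R) : eigenvalue A a ->
  eigenvalue A (sup [set a | eigenvalue A a]).
Proof.
move=> Aa; set S := [set a | eigenvalue A a].
have chi_neq0 : char_poly A != 0 by apply/monic_neq0/char_poly_monic.
have rootsA b : eigenvalue A b -> b \in rootsR (char_poly A).
  move=> Ab; have := roots_on_rootsR chi_neq0 b.
  by rewrite -eigenvalue_root_char Ab andbT in_itv /= => <-.
pose b := \big[Num.max/a]_(x <- rootsR (char_poly A) | eigenvalue A x) x.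
have Ab : eigenvalue A b by rewrite /b; elim/big_ind: _ => // x y; case: leP.
have S_le_b c : S c -> c <= b by move=> Ac; exact: le_bigmax_seq (rootsA c Ac) Ac.
apply: contraT => /negP S_sup.
have := sup_ub_strict (ex_intro _ b S_le_b) S_sup Ab.
by rewrite /= ltNge ge_sup //; exists a.
Qed.

End EigenvalueSup.

Section Distance.
Variables (T : finType) (e : rel T).
Hypotheses (e_sym : symmetric e) (e_conn : forall u v : T, connect e u v).

Lemma walk_of_lenP u v k :
  reflect (exists2 p : seq T, size p = k & path e u p && (last u p == v))
          (walk_of_len e u v k).
Proof.
apply: (iffP existsP) => [[p pP]|[p sp pP]]; first by exists (tval p); rewrite ?size_tuple.
by exists (tcast sp (in_tuple p)); rewrite val_tcast.
Qed.

Lemma walk_of_len0 u : walk_of_len e u u 0.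
Proof. by apply/walk_of_lenP; exists [::]; rewrite //= eqxx. Qed.

Lemma walk_of_len_rcons u v w k :
  walk_of_len e u v k -> e v w -> walk_of_len e u w k.+1.
Proof.
move=> /walk_of_lenP [p <- /andP [pp /eqP <-]] ew; apply/walk_of_lenP.
by exists (rcons p w); rewrite ?size_rcons // rcons_path last_rcons pp ew eqxx.
Qed.

Lemma walk_of_len_sym u v k : walk_of_len e u v k -> walk_of_len e v u k.
Proof.
move=> /walk_of_lenP [p sp /andP [pp /eqP pv]]; apply/walk_of_lenP.
exists (rev (belast u p)); first by rewrite size_rev size_belast.
rewrite -pv rev_path (sub_path _ pp) => [|x y]; last by rewrite e_sym.
by case: p {sp pp pv} => [|y p] //=; rewrite rev_cons last_rcons.
Qed.

(* A shortest walk is a path, so it visits at most #|T| vertices. *)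
Lemma walk_of_len_lt_card u v : exists2 k, (k < #|T|)%N & walk_of_len e u v k.
Proof.
have /connectP [p pp ->] := e_conn u v; have [q qq uq _] := shortenP pp.
exists (size q); first by have := max_card (mem (u :: q)); rewrite (card_uniqP uq).
by apply/walk_of_lenP; exists q; rewrite ?qq ?eqxx.
Qed.

Lemma gdist_walk u v : walk_of_len e u v (gdist e u v) /\ (gdist e u v < #|T|)%N.
Proof.
have [k k_lt wk] := walk_of_len_lt_card u v.
have hasw : has (walk_of_len e u v) (iota 0 #|T|) by apply/hasP; exists k; rewrite ?mem_iota.
have := nth_find 0 hasw; rewrite has_find size_iota in hasw.
by rewrite nth_iota.
Qed.

Lemma gdist_leq u v k : walk_of_len e u v k -> (k < #|T|)%N -> (gdist e u v <= k)%N.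
Proof. by move=> wk k_lt; rewrite leqNgt; apply/negP => /(before_find 0); rewrite nth_iota // wk. Qed.

Lemma gdistii u : gdist e u u = 0%N.
Proof.
by apply/eqP; rewrite -leqn0 gdist_leq ?walk_of_len0 //; apply/card_gt0P; exists u.
Qed.

Lemma gdist_gt0 u v : u != v -> (0 < gdist e u v)%N.
Proof.
move=> uv; rewrite lt0n; apply: contra uv => /eqP d0.
have [] := gdist_walk u v; rewrite d0 => /walk_of_lenP [p /size0nil -> /=].
by rewrite eq_sym.
Qed.

Lemma gdist_sym u v : gdist e u v = gdist e v u.
Proof.
have le_sym x y : (gdist e x y <= gdist e y x)%N.
  by have [w lt] := gdist_walk y x; apply: gdist_leq (walk_of_len_sym w) lt.
by apply/eqP; rewrite eqn_leq !le_sym.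
Qed.

Lemma gdist_edge w a b : e a b -> (gdist e w b <= (gdist e w a).+1)%N.
Proof.
move=> eab; have [wa _] := gdist_walk w a; have [_ lt_b] := gdist_walk w b.
case: (ltnP (gdist e w a).+1 #|T|) => [lt_a|]; last exact: leq_trans (ltnW lt_b).
exact: gdist_leq (walk_of_len_rcons wa eab) lt_a.
Qed.

Lemma transmission_gt0 w : (1 < #|T|)%N -> (0 < transmission e w)%N.
Proof.
rewrite (cardD1 w) ltnS => /card_gt0P [v]; rewrite !inE => /andP [vw _].
by rewrite /transmission (bigD1 v) //= addn_gt0 gdist_gt0 // eq_sym.
Qed.

End Distance.

Lemma bigmax_mulr (R : realDomainType) (I : finType) (P : pred I) (F : I -> R) k :
  0 <= k ->
  \big[Num.max/0]_(i | P i) (k * F i) = k * \big[Num.max/0]_(i | P i) F i.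
Proof.
move=> k_ge0; apply/esym/(big_morph (fun y => k * y)); last by rewrite mulr0.
by move=> y z; rewrite maxr_pMr.
Qed.

Section Gamma.
Variables (R : realType) (T : finType) (e : rel T).

Lemma sup_norm_scale (x : T -> R) k : 0 <= k ->
  sup_norm (fun v => k * x v) = k * sup_norm x.
Proof.
move=> k_ge0; rewrite /sup_norm -bigmax_mulr //.
by apply: eq_bigr => v _; rewrite normrM ger0_norm.
Qed.

Lemma gamma_x_scale (x : T -> R) k : 0 <= k ->
  gamma_x e (fun v => k * x v) = k * gamma_x e x.
Proof.
move=> k_ge0; rewrite /gamma_x -bigmax_mulr //.
by apply: eq_bigr => p _; rewrite -mulrBr normrM ger0_norm.
Qed.

Lemma gamma_x_ge0 (x : T -> R) : 0 <= gamma_x e x.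
Proof. exact: bigmax_ge_id. Qed.

Lemma le_gamma_x (x : T -> R) a b : e a b -> `|x a - x b| <= gamma_x e x.
Proof. by move=> eab; apply: (le_bigmax_cond _ (P := fun p => e p.1 p.2) (j := (a, b))). Qed.

Lemma gamma_x_walk (x : T -> R) u v k :
  walk_of_len e u v k -> `|x u - x v| <= k%:R * gamma_x e x.
Proof.
move=> /walk_of_lenP [p <- /andP [pp /eqP pv]].
elim: p u pp pv => [|y p IH] u /=; first by move=> _ ->; rewrite subrr normr0 mul0r.
case/andP => euy pp pv; apply: le_trans (ler_distD (x y) _ _) _.
by rewrite -addn1 natrD mulrDl mul1r addrC lerD ?IH ?le_gamma_x.
Qed.

Lemma feasible_normr1 (x : T -> R) : feasible x -> exists u, `|x u| = 1.
Proof.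
move=> [_ x_norm1]; case: (pickP (xpredT : pred T)) => [u0 _|T0].
  have [u _ uE] := @eq_bigmax _ _ _ 0 u0 xpredT (fun v => `|x v|) isT (fun _ _ => normr_ge0 _).
  by exists u; rewrite -uE.
by move: x_norm1; rewrite /sup_norm big_pred0 // => /esym/eqP; rewrite oner_eq0.
Qed.

Lemma feasible_normalize (x : T -> R) : \sum_v x v = 0 -> 1 <= sup_norm x ->
  exists2 y : T -> R, feasible y & gamma_x e y <= gamma_x e x.
Proof.
move=> x_sum0 x_norm_ge1; have x_norm_gt0 : 0 < sup_norm x by apply: lt_le_trans x_norm_ge1.
have k_ge0 : 0 <= (sup_norm x)^-1 by rewrite invr_ge0 ltW.
exists (fun v => (sup_norm x)^-1 * x v).
  by split; rewrite ?sup_norm_scale ?mulVf ?gt_eqF // -mulr_sumr x_sum0 mulr0.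
by rewrite gamma_x_scale // ler_piMl ?gamma_x_ge0 // invf_le1.
Qed.

Hypotheses (e_sym : symmetric e) (e_conn : forall u v : T, connect e u v).

Lemma card_le_gamma_x_transmission (x : T -> R) : feasible x ->
  exists u, #|T|%:R <= gamma_x e x * (transmission e u)%:R.
Proof.
move=> x_feas; have [u xu1] := feasible_normr1 x_feas; exists u.
have sumE : \sum_v (x u - x v) = #|T|%:R * x u.
  by rewrite sumrB x_feas.1 subr0 sumr_const mulr_natl cardE -cardT.
have -> : #|T|%:R = `|#|T|%:R * x u| by rewrite normrM xu1 mulr1 normr_nat.
rewrite -sumE; apply: le_trans (ler_norm_sum _ _ _) _.
rewrite /transmission natr_sum mulr_sumr; apply: ler_sum => v _.
by rewrite mulrC gamma_x_walk //; case: (gdist_walk e_conn u v).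
Qed.

Lemma feasible_gamma_x_le (w : T) : (1 < #|T|)%N ->
  exists2 y : T -> R, feasible y & gamma_x e y <= #|T|%:R / (transmission e w)%:R.
Proof.
move=> n_gt1; set c : R := #|T|%:R / (transmission e w)%:R.
have c_ge0 : 0 <= c by rewrite divr_ge0.
have tw_neq0 : (transmission e w)%:R != 0 :> R.
  by rewrite pnatr_eq0 -lt0n transmission_gt0.
pose x v : R := 1 - c * (gdist e w v)%:R.
have x_sum0 : \sum_v x v = 0.
  rewrite sumrB sumr_const -mulr_sumr -natr_sum -/(transmission e w) /c mulfVK //.
  by rewrite cardE -cardT subrr.
have x_norm_ge1 : 1 <= sup_norm x.
  by apply: le_trans (le_bigmax _ _ w); rewrite /x gdistii mulr0 subr0 normr1.
have [y y_feas y_le] := feasible_normalize x_sum0 x_norm_ge1; exists y => //.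
apply: le_trans y_le (bigmax_le _ c_ge0 _) => -[a b] /= eab.
have -> : x a - x b = c * ((gdist e w b)%:R - (gdist e w a)%:R) by rewrite /x; ring.
rewrite normrM ger0_norm // ler_piMr // ler_norml.
have eba : e b a by rewrite e_sym.
move: (gdist_edge e_conn w eab) (gdist_edge e_conn w eba).
by rewrite -!(ler_nat R) -!natr1 => ? ?; apply/andP; split; lra.
Qed.

End Gamma.

Section GammaBounds.
Local Open Scope classical_set_scope.
Variables (R : realType) (T : finType) (e : rel T).
Hypotheses (e_sym : symmetric e) (e_conn : forall u v : T, connect e u v)
  (n_gt1 : (1 < #|T|)%N).

Lemma gamma_le_gamma_x (x : T -> R) : feasible x -> gamma e R <= gamma_x e x.
Proof.
move=> x_feas; apply: ge_inf; last by exists x.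
by exists 0 => _ [y _ <-]; exact: gamma_x_ge0.
Qed.

Lemma gamma_max_transmission :
  gamma e R = #|T|%:R / (\max_u transmission e u)%:R.
Proof.
have [w tmaxE] := bigop.eq_bigmax (transmission e) (ltnW n_gt1).
have tmax_gt0 : 0 < (\max_u transmission e u)%:R :> R.
  by rewrite tmaxE ltr0n transmission_gt0.
have [y y_feas y_le] := feasible_gamma_x_le R e_sym e_conn w n_gt1.
apply/eqP; rewrite eq_le tmaxE (le_trans (gamma_le_gamma_x y_feas) y_le) -tmaxE /=.
apply: lb_le_inf; first by exists (gamma_x e y), y.
move=> _ [x x_feas <-]; have [u n_le] := card_le_gamma_x_transmission e_conn x_feas.
rewrite ler_pdivrMr //; apply: le_trans n_le _.
by rewrite ler_wpM2l ?gamma_x_ge0 // ler_nat leq_bigmax.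
Qed.

End GammaBounds.

Section DistanceMatrix.
Local Open Scope classical_set_scope.
Variables (R : realType) (T : finType) (e : rel T).
Hypotheses (e_sym : symmetric e) (e_conn : forall u v : T, connect e u v)
  (n_gt1 : (1 < #|T|)%N).
Local Notation D := (distmx e R).
Local Notation tmax := (\max_u transmission e u)%N.

Lemma distmx_ge0 i j : 0 <= D i j.
Proof. by rewrite mxE ler0n. Qed.

Lemma distmx_gt0 i j : i != j -> 0 < D i j.
Proof. by move=> ij; rewrite mxE ltr0n (gdist_gt0 e_conn) // (inj_eq enum_val_inj). Qed.

Lemma distmx_tr : D^T = D.
Proof. by apply/matrixP => i j; rewrite !mxE (gdist_sym e_sym e_conn). Qed.

Lemma distmx_colsum k : \sum_i D i k = (transmission e (enum_val k))%:R.
Proof.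
rewrite /transmission natr_sum (eq_bigr (fun i => (gdist e (enum_val k) (enum_val i))%:R)).
  by rewrite -(big_enum_val (fun v => (gdist e (enum_val k) v)%:R)); apply: eq_bigl.
by move=> i _; rewrite mxE (gdist_sym e_sym e_conn).
Qed.

Lemma distmx_colsum_le k : \sum_i D i k <= tmax%:R.
Proof. by rewrite distmx_colsum ler_nat (leq_bigmax (enum_val k)). Qed.

Lemma distmx_sum_gt0 : 0 < \sum_i \sum_j D i j.
Proof.
pose i0 := Ordinal (ltnW n_gt1); pose i1 := Ordinal n_gt1.
rewrite (bigD1 i0) //= (bigD1 i1) //= -addrA.
apply: lt_le_trans (distmx_gt0 (isT : i0 != i1)) _; rewrite lerDl.
by rewrite addr_ge0 ?sumr_ge0 // => i _; rewrite ?distmx_ge0 ?sumr_ge0 // => j _; rewrite distmx_ge0.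
Qed.

Lemma distmx_eigenvalue_le a : eigenvalue D a -> a <= tmax%:R.
Proof.
move=> Da; apply: le_trans (real_ler_norm (num_real a))
  (eigenvalue_norm_le_colsum distmx_ge0 Da distmx_colsum_le).
Qed.

Lemma le_dist_spec_radius a : eigenvalue D a -> a <= dist_spec_radius e R.
Proof. by move=> Da; apply: ub_le_sup Da; exists tmax%:R; exact: distmx_eigenvalue_le. Qed.

Lemma dist_spec_radius_eigen :
  eigenvalue D (dist_spec_radius e R) /\ 0 < dist_spec_radius e R.
Proof.
have [a Da a_gt0] := symmx_sum_gt0_eigen_gt0 distmx_tr distmx_sum_gt0.
by split; [exact: sup_eigenvalue Da | exact: lt_le_trans a_gt0 (le_dist_spec_radius Da)].
Qed.

Lemma dist_spec_radius_le_max : dist_spec_radius e R <= tmax%:R.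
Proof. exact/distmx_eigenvalue_le/dist_spec_radius_eigen.1. Qed.

Lemma dist_spec_radius_transmission_regular : transmission_regular e ->
  dist_spec_radius e R = tmax%:R.
Proof.
move=> reg; have [w tmaxE] := bigop.eq_bigmax (transmission e) (ltnW n_gt1).
apply/eqP; rewrite eq_le dist_spec_radius_le_max le_dist_spec_radius //.
apply/eigenvalueP; exists (const_mx 1).
  apply/rowP => k; rewrite !mxE mulr1 tmaxE -(reg (enum_val k) w) -distmx_colsum.
  by apply: eq_bigr => i _; rewrite mxE mul1r.
by apply/eqP => /rowP /(_ (Ordinal (ltnW n_gt1))); rewrite !mxE => /eqP; rewrite oner_eq0.
Qed.

Lemma transmission_regular_dist_spec_radius :
  dist_spec_radius e R = tmax%:R -> transmission_regular e.
Proof.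
move=> rhoE; have [D_rho _] := dist_spec_radius_eigen; rewrite rhoE in D_rho.
have trE u : transmission e u = tmax.
  move: (eigenvalue_colsum_eq distmx_ge0 D_rho distmx_gt0 distmx_colsum_le (enum_rank u)).
  by rewrite distmx_colsum enum_rankK => /eqP; rewrite eqr_nat => /eqP.
by move=> u v; rewrite !trE.
Qed.

End DistanceMatrix.

Theorem theorem4p1 (R : realType) (T : finType) (e : rel T)
  (e_sym : symmetric e) (e_irr : irreflexive e)
  (e_conn : forall u v : T, connect e u v) (n_ge2 : (2 <= #|T|)%N) :
  gamma e R <= #|T|%:R / dist_spec_radius e R /\
  (gamma e R = #|T|%:R / dist_spec_radius e R <-> transmission_regular e).
Proof.
have n_neq0 : #|T|%:R != 0 :> R by rewrite pnatr_eq0 -lt0n ltnW.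
have [_ rho_gt0] := dist_spec_radius_eigen R e_sym e_conn n_ge2.
have rho_le := dist_spec_radius_le_max R e_sym e_conn n_ge2.
rewrite (gamma_max_transmission R e_sym e_conn n_ge2).
split; first by apply: ler_wpM2l => //; rewrite lef_pV2 ?posrE // (lt_le_trans rho_gt0).
split => [/(mulfI n_neq0)/invr_inj/esym rhoE | reg].
  exact: (transmission_regular_dist_spec_radius e_sym e_conn n_ge2 rhoE).
by rewrite (dist_spec_radius_transmission_regular R e_sym e_conn n_ge2 reg).
Qed.
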